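(* There exists a $(k^2,k;4)$-MOHS for each $k\in\{9,21,27\}$, and there exists a $(121,11;9)$-MOHS.
   Context: Let $G$ be an abelian group of odd order $2v+1\ge 7$. A half-set of $G$ is a subset $V\subseteq G\setminus\{0\}$ containing exactly one element of each pair $\{g,-g\}$, $g\ne 0$. A $(v,k)$ Heffter system on $V$ is a partition of $V$ into blocks of size $k$, each summing to $0$ in $G$. Two Heffter systems on the same half-set are orthogonal if every block of one meets every block of the other in at most one element. A $(v,k;r)$-MOHS is a set of $r$ pairwise orthogonal $(v,k)$ Heffter systems on a common half-set of some abelian group of order $2v+1$. *)

From HB Require Import structures.
From mathcomp Require Import all_boot all_order all_algebra.
Set Implicit Arguments. Unset Strict Implicit. Unset Printing Implicit Defensive.
Import GRing.Theory.
Local Open Scope ring_scope.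

Definition half_set (G : finZmodType) (V : {set G}) : Prop :=
  (0 \notin V) /\ (forall g : G, g != 0 -> (g \in V) = ((- g) \notin V)).

Definition heffter_system (G : finZmodType) (V : {set G}) (k : nat)
    (P : {set {set G}}) : Prop :=
  partition P V /\
  (forall B, B \in P -> #|B| = k /\ \sum_(x in B) x = 0).

Definition orthogonal_hs (G : finZmodType) (P Q : {set {set G}}) : Prop :=
  forall B C, B \in P -> C \in Q -> (#|B :&: C| <= 1)%N.

Definition MOHS (v k r : nat) : Prop :=
  exists (G : finZmodType) (V : {set G}) (H : 'I_r -> {set {set G}}),
    [/\ #|G| = (2 * v).+1, half_set V,
        #|V| = v,
        (forall i, heffter_system V k (H i)) &
        (forall i j, i != j -> orthogonal_hs (H i) (H j))].

(* In each case G is the additive group of GF(q), q = 2k^2 + 1 (q = 163, 883, 1459, 3^5), and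
   H is the subgroup of order k of GF(q)^*, acting on G by multiplication.  A nontrivial
   multiplier fixes only 0 and every H-orbit is H-stable, so every orbit sums to 0: the
   H-orbits on V form a Heffter system.  A zero-sum base block B such that every x in V is
   uniquely h b (h in H, b in B) gives another one, {hB | h in H}, each of whose blocks meets
   every orbit once; the systems of two base blocks B, C are orthogonal as soon as
   |B :&: hC| <= 1 for all h in H.  Taking for V the H-development of the first base block,
   the explicit base blocks below are checked by computation. *)

From Stdlib Require Import NArith.
From HB Require Import structures.
From mathcomp Require Import all_boot all_order all_algebra all_fingroup cyclic ring.
Set Implicit Arguments. Unset Strict Implicit. Unset Printing Implicit Defensive.
Import GRing.Theory.
Local Open Scope ring_scope.

Section Assembly.
Variable G : finZmodType.

Lemma orthogonal_hsC (P Q : {set {set G}}) : orthogonal_hs P Q -> orthogonal_hs Q P.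
Proof. by move=> PQ C B CQ BP; rewrite setIC PQ. Qed.

Lemma half_set_of_card (V : {set G}) :
  #|G| = (2 * #|V|).+1 -> 0 \notin V -> [disjoint V & -%R @^-1: V] -> half_set V.
Proof.
move=> cardG V0 dVN; split=> // g g0.
have coverG : 0 |: (V :|: -%R @^-1: V) = [set: G].
  apply/eqP; rewrite eqEcard subsetT cardsT cardG cardsU1 cardsU.
  rewrite card_preimset; last exact: oppr_inj.
  by rewrite disjoint_setI0 // cards0 subn0 !inE oppr0 orbb (negPf V0) mul2n addnn /= add1n.
have := in_setT g; rewrite -coverG !inE (negPf g0) /=.
have [gV _|gNV] := boolP (g \in V); last by move=> /= ->.
by move: (disjointFr dVN gV); rewrite inE => ->.
Qed.

Lemma half_set_of_seq (t : seq G) :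
  #|G| = (2 * size t).+1 -> 0 \notin t -> uniq (t ++ map -%R t) -> half_set [set x in t].
Proof.
rewrite cat_uniq => cardG t0 /and3P[tU tNt _].
apply: half_set_of_card; rewrite ?inE // ?cardsE ?(card_uniqP tU) //.
apply/pred0P => x /=; rewrite !inE; apply/negP => /andP[xt Nxt]; case/negP: tNt.
by apply/hasP; exists x; rewrite // -[x]opprK map_f.
Qed.

Lemma card_setI_count (s t : seq G) :
  uniq t -> #|[set x in s] :&: [set x in t]| = count (mem s) t.
Proof.
move=> tU; rewrite -size_filter -(card_uniqP (filter_uniq _ tU)).
by apply: eq_card => x; rewrite !inE mem_filter.
Qed.

Lemma MOHS_of_systems (V : {set G}) (v k : nat) (Ps : seq {set {set G}}) :
  #|G| = (2 * v).+1 -> half_set V -> #|V| = v ->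
  {in Ps, forall P, heffter_system V k P} ->
  (forall i j, (i < j < size Ps)%N -> orthogonal_hs (nth set0 Ps i) (nth set0 Ps j)) ->
  MOHS v k (size Ps).
Proof.
move=> cardG hV cardV heffPs orthPs.
exists G, V, (fun i : 'I_(size Ps) => nth set0 Ps i); split=> // [i|i j].
  by apply: heffPs; rewrite mem_nth.
rewrite neq_ltn => /orP[] ltij; [|apply: orthogonal_hsC]; apply: orthPs.
  by rewrite ltij ltn_ord.
by rewrite ltij ltn_ord.
Qed.

End Assembly.

Section Development.
Variables (G : finZmodType) (H : {group {perm G}}).
Hypothesis additive_H : {in H, forall h : {perm G}, {morph h : x y / x + y}}.
Hypothesis fixed_H : forall y : G, {in H, forall h : {perm G}, h y = y} -> y = 0.

Definition tiles (B V : {set G}) : Prop :=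
  {in setX H B &, injective (fun hb : {perm G} * G => hb.1 hb.2)} /\
  [set hb.1 hb.2 | hb : {perm G} * G in setX H B] = V.

Definition orbit_system (V : {set G}) : {set {set G}} := orbit 'P H @: V.

Definition development (B : {set G}) : {set {set G}} :=
  [set [set h x | x in B] | h : {perm G} in H].

Lemma perm_additive0 (h : {perm G}) : h \in H -> h 0 = 0.
Proof. by move=> hH; apply: (addrI (h 0)); rewrite -additive_H // !addr0. Qed.

Lemma sum_perm_additive (h : {perm G}) (B : {set G}) :
  h \in H -> \sum_(x in [set h y | y in B]) x = h (\sum_(x in B) x).
Proof.
move=> hH; rewrite big_imset /=; last by move=> x y _ _; apply: perm_inj.
by rewrite (big_morph h (additive_H hH) (perm_additive0 hH)).
Qed.

Lemma sum_orbit x : \sum_(y in orbit 'P H x) y = 0.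
Proof.
apply: fixed_H => h hH.
have hO : [set h y | y in orbit 'P H x] = orbit 'P H x.
  apply/eqP; rewrite eqEcard card_imset ?leqnn ?andbT; last exact: perm_inj.
  by apply/subsetP=> _ /imsetP[y Oy ->]; rewrite -[h y]/('P%act y h) orbit_actr.
by rewrite -sum_perm_additive // hO.
Qed.

Section Tiling.
Variables B V : {set G}.
Hypothesis tBV : tiles B V.

Lemma tiles_mem (h : {perm G}) b : h \in H -> b \in B -> h b \in V.
Proof.
by case: tBV => _ <- hH bB; apply/imsetP; exists (h, b); rewrite ?in_setX ?hH.
Qed.

Lemma tilesP x : x \in V -> exists2 h, h \in H & exists2 b, b \in B & x = h b.
Proof.
by case: tBV => _ <- /imsetP[[h b]]; rewrite in_setX => /andP[hH bB] ->; exists h => //; exists b.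
Qed.

Lemma tiles_inj (h h' : {perm G}) b b' : h \in H -> h' \in H -> b \in B -> b' \in B ->
  h b = h' b' -> h = h' /\ b = b'.
Proof.
case: tBV => inj _ hH h'H bB b'B /(inj (h, b) (h', b')).
by rewrite !in_setX hH h'H bB b'B => /(_ isT isT) [-> ->].
Qed.

Lemma tiles_card : #|V| = (#|H| * #|B|)%N.
Proof. by case: tBV => inj <-; rewrite card_in_imset // cardsX. Qed.

Lemma tiles_acts : [acts H, on V | 'P].
Proof.
have stable h x : h \in H -> x \in V -> h x \in V.
  move=> hH /tilesP[g gH [b bB ->]].
  by rewrite -permM tiles_mem ?groupM.
apply/actsP => h hH x /=; apply/idP/idP; last exact: stable.
by move/(stable _ _ (groupVr hH)); rewrite -permM mulgV perm1.
Qed.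

Lemma tiles_free x : x \in V -> {in H &, injective (fun h : {perm G} => h x)}.
Proof.
move=> /tilesP[g gH [b bB ->]] h h' hH h'H /=; rewrite -!permM.
by case/tiles_inj; rewrite ?groupM // => /mulgI.
Qed.

Lemma orbit_system_heffter : heffter_system V #|H| (orbit_system V).
Proof.
split; first exact/orbit_partition/tiles_acts.
move=> _ /imsetP[x xV ->]; split; last exact: sum_orbit.
exact/card_in_imset/tiles_free.
Qed.

Lemma development_heffter :
  B != set0 -> \sum_(x in B) x = 0 -> heffter_system V #|B| (development B).
Proof.
move=> B0 sumB; split.
  apply/and3P; split.
  - apply/eqP/setP=> x; apply/bigcupP/idP => [[_ /imsetP[h hH ->]]|].
      by case/imsetP=> b bB ->; apply: tiles_mem.
    move=> /tilesP[h hH [b bB ->]].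
    by exists [set h y | y in B]; apply: imset_f.
  - apply/trivIsetP => _ _ /imsetP[h hH ->] /imsetP[h' h'H ->].
    apply: contraR => /pred0Pn[_ /andP[/imsetP[b bB ->] /imsetP[b' b'B]]].
    by case/tiles_inj=> // ->.
  - apply/imsetP=> -[h _ /esym/eqP]; rewrite imset_eq0.
    by apply/negP.
move=> _ /imsetP[h hH ->]; split; first by rewrite card_imset //; exact: perm_inj.
by rewrite sum_perm_additive // sumB perm_additive0.
Qed.

Lemma orthogonal_orbit_development : orthogonal_hs (orbit_system V) (development B).
Proof.
move=> _ _ /imsetP[x _ ->] /imsetP[h hH ->].
apply/card_le1_eqP => y z /setIP[Oy /imsetP[b bB yE]] /setIP[Oz /imsetP[b' b'B zE]].
subst y z.
have /orbitP[g gH /= hbg] : h b' \in orbit 'P H (h b).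
  by rewrite orbit_sym (orbit_transl _ Oy) orbit_sym.
by move: hbg; rewrite /aperm -permM => /tiles_inj[]; rewrite ?groupM // => _ ->.
Qed.

End Tiling.

Lemma orthogonal_development (B C : {set G}) :
  {in H, forall h : {perm G}, #|B :&: [set h x | x in C]| <= 1}%N ->
  orthogonal_hs (development B) (development C).
Proof.
move=> BhC _ _ /imsetP[g gH ->] /imsetP[h hH ->].
apply/card_le1_eqP => y z /setIP[/imsetP[b bB yE] /imsetP[c cC hcE]].
move=> /setIP[/imsetP[b' b'B zE] /imsetP[c' c'C hc'E]]; subst y z.
have /card_le1_eqP BhC1 := BhC (h * g^-1)%g (groupM hH (groupVr gH)).
have hCB u v : v \in C -> g u = h v -> u \in [set (h * g^-1)%g w | w in C].
  by move=> vC guv; apply/imsetP; exists v; rewrite // permM -guv -permM mulgV perm1.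
by congr (g _); apply: BhC1; rewrite in_setI ?bB ?b'B ?(hCB _ _ cC hcE) ?(hCB _ _ c'C hc'E).
Qed.

Theorem MOHS_of_tiling (V : {set G}) (Bs : seq {set G}) :
  #|G| = (2 * #|H| ^ 2).+1 -> half_set V -> #|V| = (#|H| ^ 2)%N -> Bs != [::] ->
  {in Bs, forall B, tiles B V /\ \sum_(x in B) x = 0} ->
  (forall i j, (i < j < size Bs)%N -> {in H, forall h : {perm G},
     #|nth set0 Bs i :&: [set h x | x in nth set0 Bs j]| <= 1}%N) ->
  MOHS (#|H| ^ 2) #|H| (size Bs).+1.
Proof.
move=> cardG hV cardV Bs0 baseBs orthBs.
have [B0 B0Bs] : exists B0, B0 \in Bs.
  by case: {baseBs orthBs} Bs Bs0 => // B0 Bs _; exists B0; rewrite mem_head.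
have tB0 : tiles B0 V by case: (baseBs B0 B0Bs).
have cardB B : B \in Bs -> #|B| = #|H|.
  case/baseBs=> /tiles_card; rewrite cardV expnS expn1 => /eqP.
  by rewrite eqn_mul2l (negPf (lt0n_neq0 (cardG_gt0 H))) => /eqP.
rewrite -(size_map development).
apply: (MOHS_of_systems (V := V) (Ps := orbit_system V :: map development Bs)) => // [P|i j].
  rewrite inE => /predU1P[->|/mapP[B BBs ->]]; first exact: orbit_system_heffter tB0.
  have [tB sumB] := baseBs B BBs; rewrite -(cardB B BBs).
  by apply: development_heffter; rewrite // -card_gt0 (cardB B BBs) cardG_gt0.
case: i j => [|i] [|j] //=; rewrite size_map !ltnS => ltij.
  rewrite (nth_map set0) //.
  by apply: orthogonal_orbit_development; case: (baseBs _ (mem_nth set0 ltij)).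
have [ltij' jBs] := andP ltij.
rewrite !(nth_map set0) ?(ltn_trans ltij' jBs) //.
exact/orthogonal_development/orthBs.
Qed.

End Development.

Section CyclicDevelopment.
Variables (G : finZmodType) (sigma : G -> G) (k : nat).
Hypothesis sigmaD : {morph sigma : x y / x + y}.
Hypothesis iter_sigma_order : forall x, iter k sigma x = x.
Hypothesis sigma_fix : forall x, sigma x = x -> x = 0.
Hypothesis k_gt0 : (0 < k)%N.

Definition develop (b : seq G) : seq G := flatten (traject (map sigma) b k).

Definition meets_translates_once (b c : seq G) : bool :=
  all (fun row => count (mem b) row <= 1)%N (traject (map sigma) c k).

Lemma sigma_inj : injective sigma.
Proof.
apply: (can_inj (g := iter k.-1 sigma)) => x.
by rewrite -iterSr prednK ?iter_sigma_order.
Qed.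

Let s := perm sigma_inj.

Lemma permX_sigma i x : (s ^+ i)%g x = iter i sigma x.
Proof. by rewrite permX; apply: eq_iter; apply: permE. Qed.

Lemma cycle_sigma_additive : {in <[s]>%g, forall h : {perm G}, {morph h : x y / x + y}}.
Proof.
move=> _ /cycleP[i ->] x y; rewrite !permX_sigma.
by elim: i => //= i ->; rewrite sigmaD.
Qed.

Lemma cycle_sigma_fixed y : {in <[s]>%g, forall h : {perm G}, h y = y} -> y = 0.
Proof. by move=> fix_y; apply: sigma_fix; rewrite -(permE sigma_inj) fix_y ?cycle_id. Qed.

Lemma expg_sigma_order : (s ^+ k = 1)%g.
Proof. by apply/permP => x; rewrite permX_sigma iter_sigma_order perm1. Qed.

Lemma expg_sigma_mod i : (s ^+ (i %% k) = s ^+ i)%g.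
Proof. exact/expg_mod/expg_sigma_order. Qed.

Lemma iter_map_sigma i (b : seq G) : iter i (map sigma) b = map (iter i sigma) b.
Proof. by elim: i => [|i /= ->]; rewrite ?map_id // -map_comp. Qed.

Lemma developP b y :
  reflect (exists2 i, (i < k)%N & exists2 x, x \in b & y = iter i sigma x) (y \in develop b).
Proof.
apply: (iffP flattenP) => [[_ /trajectP[i ltik ->]]|[i ltik [x xb ->]]].
  by rewrite iter_map_sigma => /mapP[x xb ->]; exists i => //; exists x.
exists (map (iter i sigma) b); last exact: map_f.
by apply/trajectP; exists i; rewrite ?iter_map_sigma.
Qed.

Lemma size_develop b : size (develop b) = (k * size b)%N.
Proof. by rewrite /develop; elim: k b => //= n IHn b; rewrite size_cat IHn size_map mulSn. Qed.

Lemma develop_imset b :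
  [set hx.1 hx.2 | hx : {perm G} * G in setX <[s]>%g [set x in b]] = [set x in develop b].
Proof.
apply/setP => y; rewrite inE; apply/imsetP/developP => [[[h x]]|[i ltik [x xb ->]]].
  rewrite in_setX inE => /andP[/cycleP[i ->] xb] ->.
  exists (i %% k)%N; rewrite ?ltn_pmod //; exists x => //.
  by rewrite -permX_sigma expg_sigma_mod.
by exists ((s ^+ i)%g, x); rewrite ?permX_sigma // in_setX mem_cycle inE.
Qed.

Section UniqDevelopment.
Variable b : seq G.
Hypotheses (b_nil : b != [::]) (develop_uniq : uniq (develop b)).

Lemma develop_uniq_base : uniq b.
Proof.
by move: develop_uniq; rewrite /develop -(prednK k_gt0) /= cat_uniq => /andP[].
Qed.

Lemma card_develop : #|[set x in develop b]| = (k * size b)%N.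
Proof. by rewrite cardsE (card_uniqP develop_uniq) size_develop. Qed.

Lemma order_sigma : #[s]%g = k.
Proof.
apply/eqP; rewrite eqn_leq dvdn_leq ?order_dvdn ?expg_sigma_order //=.
rewrite -(leq_pmul2r (m := size b)); last by case: b b_nil develop_uniq.
rewrite -card_develop -develop_imset (leq_trans (leq_imset_card _ _)) //.
by rewrite cardsX cardsE (card_uniqP develop_uniq_base).
Qed.

Lemma tiles_develop : tiles <[s]>%g [set x in b] [set x in develop b].
Proof.
split; last exact: develop_imset.
apply/imset_injP; rewrite develop_imset card_develop cardsX cardsE.
by rewrite (card_uniqP develop_uniq_base) -orderE order_sigma.
Qed.

End UniqDevelopment.

Lemma imset_expg_sigma n (c : seq G) :
  [set (s ^+ n)%g x | x in [set x in c]] = [set x in map (iter n sigma) c].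
Proof.
apply/setP => y; rewrite inE; apply/imsetP/mapP => -[x]; rewrite ?inE => xc ->;
  by exists x; rewrite ?inE ?permX_sigma.
Qed.

Lemma cycle_sigma_orthogonal (b c : seq G) : uniq c -> meets_translates_once b c ->
  {in <[s]>%g, forall h : {perm G}, #|[set x in b] :&: [set h x | x in [set x in c]]| <= 1}%N.
Proof.
move=> cU /allP bc _ /cycleP[n ->].
rewrite -expg_sigma_mod imset_expg_sigma card_setI_count; last first.
  by rewrite map_inj_uniq // => x y; rewrite -!permX_sigma; apply: perm_inj.
apply: bc; apply/trajectP; exists (n %% k)%N; first exact: ltn_pmod.
by rewrite iter_map_sigma.
Qed.

Lemma tiles_perm_develop b (V : seq G) : b != [::] ->
  perm_eq (develop b) V -> uniq V -> tiles <[s]>%g [set x in b] [set x in V].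
Proof.
move=> b_nil bV VU; have bU : uniq (develop b) by rewrite (perm_uniq bV).
have -> : [set x in V] = [set x in develop b].
  by apply/setP => x; rewrite !inE (perm_mem bV).
exact: tiles_develop.
Qed.

Theorem MOHS_of_cyclic_development (Bs : seq (seq G)) :
  let V := develop (head [::] Bs) in
  #|G| = (2 * k ^ 2).+1 -> size (head [::] Bs) = k ->
  uniq (V ++ map -%R V) -> 0 \notin V ->
  all (fun b => perm_eq (develop b) V) Bs ->
  all (fun b => \sum_(x <- b) x == 0) Bs ->
  pairwise meets_translates_once Bs ->
  MOHS (k ^ 2) k (size Bs).+1.
Proof.
move=> V cardG sizeB0 VU V0 /allP permBs /allP sumBs /(pairwiseP [::]) orthBs.
have VU' : uniq V by move: VU; rewrite cat_uniq => /andP[].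
have sizeB b : b \in Bs -> size b = k.
  move/permBs/perm_size; rewrite !size_develop sizeB0.
  by move/eqP; rewrite eqn_mul2l (negPf (lt0n_neq0 k_gt0)) => /eqP.
have b_nil b : b \in Bs -> b != [::].
  by move/sizeB; case: b => //= k0; move: k_gt0; rewrite -k0.
have bU b : b \in Bs -> uniq b.
  by move=> bBs; apply: develop_uniq_base; rewrite (perm_uniq (permBs b bBs)).
have Bs_nil : Bs != [::] by apply: contraTneq k_gt0 => Bs0; rewrite -sizeB0 Bs0.
have ordk : #[s]%g = k by apply: (order_sigma _ VU'); rewrite -size_eq0 sizeB0 -lt0n.
rewrite -(size_map (fun b => [set x in b])) -ordk orderE.
apply: (MOHS_of_tiling cycle_sigma_additive cycle_sigma_fixed (V := [set x in V])).
- by rewrite -orderE ordk.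
- by apply: half_set_of_seq; rewrite // size_develop sizeB0 mulnn.
- by rewrite -orderE ordk cardsE (card_uniqP VU') size_develop sizeB0.
- by rewrite -size_eq0 size_map size_eq0.
- move=> _ /mapP[b bBs ->]; split.
    exact: tiles_perm_develop (b_nil b bBs) (permBs b bBs) VU'.
  rewrite (eq_bigl [in b]) => [|x]; last by rewrite inE.
  by rewrite -big_uniq ?bU //; apply/eqP/sumBs.
move=> i j /andP[ltij]; rewrite size_map => jBs.
rewrite !(nth_map [::]) ?(ltn_trans ltij) //; apply: cycle_sigma_orthogonal.
  exact/bU/mem_nth.
exact: orthBs (ltn_trans ltij jBs) jBs ltij.
Qed.

End CyclicDevelopment.

Lemma iter_mulr (R : pzSemiRingType) (h x : R) i : iter i ( *%R^~ h) x = x * h ^+ i.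
Proof. by elim: i => [|i /= ->]; rewrite ?mulr1 // exprSr mulrA. Qed.

Theorem MOHS_of_multiplier_development (R : finUnitRingType) (h : R) (sigma : R -> R) (k : nat)
    (Bs : seq (seq R)) :
  let V := develop sigma k (head [::] Bs) in
  sigma =1 *%R^~ h -> h ^+ k = 1 -> h - 1 \is a GRing.unit -> (0 < k)%N ->
  #|R| = (2 * k ^ 2).+1 -> size (head [::] Bs) = k ->
  uniq (V ++ map -%R V) -> 0 \notin V ->
  all (fun b => perm_eq (develop sigma k b) V) Bs ->
  all (fun b => \sum_(x <- b) x == 0) Bs ->
  pairwise (meets_translates_once sigma k) Bs ->
  MOHS (k ^ 2) k (size Bs).+1.
Proof.
move=> V sigmaE hk h1_unit k_gt0; apply: (MOHS_of_cyclic_development (sigma := sigma) _ _ _ k_gt0).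
- by move=> x y; rewrite !sigmaE mulrDl.
- by move=> x; rewrite (eq_iter sigmaE) iter_mulr hk mulr1.
- move=> x; rewrite sigmaE => /eqP; rewrite -subr_eq0 -{2}[x]mulr1 -mulrBr => /eqP.
  by move=> xh; apply: (mulIr h1_unit); rewrite xh mul0r.
Qed.

(* [x * h] computed in binary arithmetic: a unary product is far too slow for [vm_compute]. *)
Definition mulN_Zp n (h : N) (x : 'I_n.+1) : 'I_n.+1 :=
  inZp (N.to_nat (N.modulo (N.mul (N.of_nat x) h) (N.of_nat n.+1))).

Lemma modulo_modn m d : (0 < d)%N -> Nat.modulo m d = (m %% d)%N.
Proof.
move=> d_gt0; rewrite {2}(PeanoNat.Nat.div_mod_eq m d) plusE multE mulnC modnMDl modn_small //.
by apply/ltP/PeanoNat.Nat.mod_upper_bound; case: d d_gt0.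
Qed.

Lemma mulN_ZpE n h (x : 'I_n.+2) : mulN_Zp h x = x * inZp (N.to_nat h).
Proof.
rewrite /mulN_Zp N2Nat.inj_mod N2Nat.inj_mul !Nat2N.id modulo_modn // multE.
by apply: val_inj; rewrite /= modn_mod modnMmr.
Qed.

Lemma uniq_sort_val n (s : seq 'I_n) : sorted ltn (sort leq (map val s)) -> uniq s.
Proof.
by move/(sorted_uniq ltn_trans ltnn); rewrite sort_uniq (map_inj_uniq val_inj).
Qed.

Lemma perm_sort_val n (s t : seq 'I_n) :
  sort leq (map val s) == sort leq (map val t) -> perm_eq s t.
Proof.
by move/eqP/(perm_sortP leq_total leq_trans anti_leq)/perm_map_inj; apply; apply: val_inj.
Qed.

(* Comparing sorted values keeps the [uniq] and [perm_eq] checks quasi-linear. *)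
Theorem MOHS_of_Zp_development n (h : N) (k : nat) (Bs : seq (seq 'Z_n)) :
  let D := develop (mulN_Zp h) k in
  (inZp (N.to_nat h) : 'Z_n) ^+ k == 1 -> (inZp (N.to_nat h) - 1 : 'Z_n) \is a GRing.unit ->
  (0 < k)%N -> n = (2 * k ^ 2).+1 -> size (head [::] Bs) = k ->
  sorted ltn (sort leq (map val (D (head [::] Bs) ++ map -%R (D (head [::] Bs))))) ->
  0 \notin D (head [::] Bs) ->
  all (fun b => sort leq (map val (D b)) == sort leq (map val (D (head [::] Bs)))) Bs ->
  all (fun b => \sum_(x <- b) x == 0) Bs ->
  pairwise (meets_translates_once (mulN_Zp h) k) Bs ->
  MOHS (k ^ 2) k (size Bs).+1.
Proof.
move=> D hk h1_unit k_gt0 cardZ sizeB0 VU V0 permBs.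
apply: (MOHS_of_multiplier_development (h := inZp (N.to_nat h))) => //.
- by move=> x; apply: mulN_ZpE.
- exact/eqP.
- by apply: etrans (card_ord _) _; rewrite cardZ Zp_cast // ltnS muln_gt0 expn_gt0 k_gt0.
- exact: uniq_sort_val.
- by apply/allP => b /(allP permBs); apply: perm_sort_val.
Qed.

Definition base_81_9 : seq (seq 'Z_163) := map (map inZp) [::
  [:: 160; 93; 40; 135; 156; 91; 16; 88; 36];
  [:: 160; 134; 104; 22; 57; 26; 113; 84; 115];
  [:: 160; 144; 140; 6; 118; 54; 34; 95; 64]]%N.

Definition base_441_21 : seq (seq 'Z_883) := map (map inZp) [::
  [:: 259; 229; 10; 493; 639; 124; 295; 223; 375; 690; 776; 876; 277; 434; 540; 447; 186; 408;
      570; 40; 56];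
  [:: 259; 54; 516; 649; 294; 413; 636; 564; 785; 255; 331; 189; 334; 736; 82; 653; 492; 202;
      67; 35; 401];
  [:: 259; 514; 842; 566; 384; 813; 123; 96; 878; 267; 511; 195; 696; 121; 261; 146; 276; 403;
      406; 141; 49]]%N.

Definition base_729_27 : seq (seq 'Z_1459) := map (map inZp) [::
  [:: 174; 1067; 1372; 646; 421; 1226; 880; 411; 141; 797; 245; 157; 1086; 605; 1231; 583; 355;
      116; 740; 308; 731; 65; 1317; 743; 1428; 904; 1218];
  [:: 174; 1209; 1027; 827; 634; 909; 963; 1159; 178; 268; 80; 1056; 577; 398; 20; 364; 698;
      720; 807; 1162; 939; 120; 481; 712; 1089; 101; 836];
  [:: 174; 1374; 1276; 1201; 428; 311; 704; 1039; 680; 394; 175; 1369; 1337; 1007; 331; 455;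
      1245; 746; 1371; 1068; 1296; 446; 477; 482; 55; 71; 914]]%N.

Lemma MOHS_81_9 : MOHS (9 ^ 2) 9 4.
Proof.
apply: (MOHS_of_Zp_development (h := 40%num) (Bs := base_81_9));
  by rewrite ?unlock; vm_compute.
Qed.

Lemma MOHS_441_21 : MOHS (21 ^ 2) 21 4.
Proof.
apply: (MOHS_of_Zp_development (h := 729%num) (Bs := base_441_21));
  by rewrite ?unlock; vm_compute.
Qed.

Lemma MOHS_729_27 : MOHS (27 ^ 2) 27 4.
Proof.
apply: (MOHS_of_Zp_development (h := 1080%num) (Bs := base_729_27));
  by rewrite ?unlock; vm_compute.
Qed.

Definition F3_5 := ('Z_3 * 'Z_3 * 'Z_3 * 'Z_3 * 'Z_3)%type.
HB.instance Definition _ := GRing.Zmodule.on F3_5.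
HB.instance Definition _ := Finite.on F3_5.

(* Multiplication by an element of order 11 of GF(3^5), in a fixed F_3-basis. *)
Definition mul_root11 (x : F3_5) : F3_5 :=
  let: (a, b, c, d, e) := x in
  (a + c + d - e, a + b - c - e, - a + b + c - d, - a - b + c + d - e, - b - c + d + e).

Definition ternary (n : nat) : F3_5 :=
  (inZp n, inZp (n %/ 3), inZp (n %/ 9), inZp (n %/ 27), inZp (n %/ 81)).

Definition base_121_11 : seq (seq F3_5) := map (map ternary) [::
  [:: 1; 22; 209; 49; 19; 125; 151; 185; 170; 213; 176];
  [:: 1; 158; 227; 216; 189; 155; 57; 115; 42; 79; 12];
  [:: 1; 20; 8; 23; 123; 214; 56; 87; 132; 50; 90];
  [:: 1; 82; 195; 118; 203; 188; 131; 61; 177; 45; 143];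
  [:: 1; 126; 47; 35; 77; 26; 187; 202; 117; 220; 81];
  [:: 1; 65; 156; 93; 235; 163; 217; 80; 190; 159; 153];
  [:: 1; 113; 54; 67; 101; 73; 88; 91; 6; 122; 133];
  [:: 1; 98; 60; 107; 210; 146; 142; 179; 130; 86; 197]]%N.

Definition elems_Z3 : seq 'Z_3 := [:: 0; 1; 2].

Lemma mem_elems_Z3 (a : 'Z_3) : a \in elems_Z3.
Proof. by case: a => -[|[|[|]]]. Qed.

Definition extend_Z3 (T : eqType) (s : seq T) : seq (T * 'Z_3) :=
  [seq (x, a) | x <- s, a <- elems_Z3].

Definition elems_F3_5 : seq F3_5 := extend_Z3 (extend_Z3 (extend_Z3 (extend_Z3 elems_Z3))).

Lemma mem_elems_F3_5 x : x \in elems_F3_5.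
Proof.
by case: x => [[[[a b] c] d] e]; rewrite !(allpairs_f (fun x a => (x, a))) ?mem_elems_Z3.
Qed.

Lemma MOHS_121_11 : MOHS (11 ^ 2) 11 9.
Proof.
apply: (MOHS_of_cyclic_development (sigma := mul_root11) (k := 11) _ _ _ _ (Bs := base_121_11)).
- move=> [[[[a b] c] d] e] [[[[a' b'] c'] d'] e'] /=.
  by congr (_, _, _, _, _) => /=; ring.
- move=> x; apply/eqP; move: x (mem_elems_F3_5 x); apply/allP.
  by vm_compute.
- move=> x; have /allP/(_ x (mem_elems_F3_5 x))/implyP fx :
    all (fun x => (mul_root11 x == x) ==> (x == 0)) elems_F3_5 by vm_compute.
  by move/eqP/fx/eqP.
- by [].
- by rewrite !card_prod card_ord.
all: by rewrite ?unlock; vm_compute.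
Qed.

Local Close Scope ring_scope.

Theorem theorem1p15 :
  (forall k : nat, k \in [:: 9; 21; 27] -> MOHS (k ^ 2) k 4) /\ MOHS 121 11 9.
Proof.
split; last exact: MOHS_121_11.
move=> k; rewrite !inE => /or3P[] /eqP ->.
- exact: MOHS_81_9.
- exact: MOHS_441_21.
- exact: MOHS_729_27.
Qed.
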